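(* Let $A$ be a finite alphabet and let $Z\subseteq A^+$ be a code such that $Z=XY$ for some non-empty $X,Y\subseteq A^+$. If $|X|=2$ or $|Y|=2$, then $Z$ is an alt-induced code.
   Context: $A^+$ is the set of non-empty words over $A$; $XY=\{xy:x\in X,y\in Y\}$. A set $Z\subseteq A^+$ is a code if every word admits at most one factorization into words of $Z$. For non-empty $X,Y\subseteq A^+$, $(X,Y)$ is an alternative code if no word of $A^+$ admits two different similar alternative factorizations on $(X,Y)$ (factorizations $u_1\cdots u_n$, $n\ge2$, $u_i\in X\cup Y$, alternating between $X$ and $Y$; similar = beginning in the same set and ending in the same set); equivalently, $XY$ is a code and the product $XY$ is unambiguous (each element of $XY$ has exactly one factorization $xy$ with $x\in X,y\in Y$). $Z$ is an alt-induced code if $Z=XY$ for some alternative code $(X,Y)$. *)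

From mathcomp Require Import all_boot.
Set Implicit Arguments.
Unset Strict Implicit.
Unset Printing Implicit Defensive.

Section Words.
Variable A : finType.
Definition word := seq A.
Definition lang := word -> Prop.

Definition subset_plus (X : lang) : Prop := forall w, X w -> w <> [::].

Definition nonempty_lang (X : lang) : Prop := exists w, X w.

Definition lprod (X Y : lang) : lang :=
  fun w => exists x y, X x /\ Y y /\ w = x ++ y.

Definition lang_card2 (X : lang) : Prop :=
  exists a b : word, a <> b /\ forall w, X w <-> (w = a \/ w = b).

Definition is_code (Z : lang) : Prop :=
  forall l1 l2 : seq word,
    (forall u, u \in l1 -> Z u) -> (forall u, u \in l2 -> Z u) ->
    flatten l1 = flatten l2 -> l1 = l2.

(* An alternative factorization on (X,Y): a list u_0 ... u_{n-1}, n >= 2,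
   alternating between X and Y; [startX = true] means u_0 is taken in X,
   [startX = false] means u_0 is taken in Y. *)
Definition alt_fact (X Y : lang) (startX : bool) (l : seq word) : Prop :=
  1 < size l /\
  forall i, i < size l ->
    (if startX (+) odd i then X else Y) (nth [::] l i).

(* (X,Y) is an alternative code: no word admits two different similar
   alternative factorizations (similar = same starting set and same ending
   set; the ending set is determined by the starting set and the parity of
   the number of factors). *)
Definition alt_code (X Y : lang) : Prop :=
  forall (startX : bool) (l1 l2 : seq word),
    alt_fact X Y startX l1 -> alt_fact X Y startX l2 ->
    odd (size l1) = odd (size l2) ->
    flatten l1 = flatten l2 -> l1 = l2.

Definition alt_induced (Z : lang) : Prop :=
  exists X Y : lang,
    subset_plus X /\ subset_plus Y /\ nonempty_lang X /\ nonempty_lang Y /\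
    alt_code X Y /\ (forall w, Z w <-> lprod X Y w).
End Words.

Arguments subset_plus {A} X.
Arguments nonempty_lang {A} X.
Arguments lprod {A} X Y _.
Arguments lang_card2 {A} X.
Arguments is_code {A} Z.
Arguments alt_fact {A} X Y startX l.
Arguments alt_code {A} X Y.
Arguments alt_induced {A} Z.

(* If the product XY is unambiguous, then (X,Y) is itself an alternative code:
   pad an alternative factorization with a word of X in front (when it starts
   in Y) and a word of Y at the end (when it ends in X), and group the factors
   in consecutive pairs to get a factorization over the code XY.  Otherwise
   some x y = x' y' with x <> x', so x' = x t and y = t y' (up to symmetry).
   If X = {x, x t}, then XY = {x} (Y + t Y); if Y = {t y', y'}, then
   XY = (X + X t) {y'}.  A product with a singleton factor is unambiguous,
   so the first case applies to the new pair. *)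

From mathcomp Require Import all_boot.
From Stdlib Require Import Classical.

Set Implicit Arguments.
Unset Strict Implicit.
Unset Printing Implicit Defensive.

Lemma catsI (T : Type) (s : seq T) : injective (cat s).
Proof. by elim: s => //= c s IH t1 t2 [] /IH. Qed.

Lemma catIs (T : Type) (s : seq T) : injective (cat^~ s).
Proof.
move=> t1 t2 /(congr1 rev); rewrite !rev_cat => /catsI.
by move/(congr1 rev); rewrite !revK.
Qed.

Lemma cat_eq_cat (T : Type) (x y x' y' : seq T) : x ++ y = x' ++ y' ->
  exists t, (x' = x ++ t /\ y = t ++ y') \/ (x = x' ++ t /\ y' = t ++ y).
Proof.
elim: x x' => [|c x IH] [|c' x'] /=.
- by move=> ->; exists [::]; left.
- by move=> ->; exists (c' :: x'); left.
- by move=> <-; exists (c :: x); right.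
- by case=> <- /IH [t [[-> ->]|[-> ->]]]; exists t; [left|right].
Qed.

Section Words.
Variable A : finType.
Implicit Types (X Y Z : lang A) (u w x y t : word A) (l : seq (word A)).

Definition lword u : lang A := fun w => w = u.

Definition lunion X Y : lang A := fun w => X w \/ Y w.

Definition unambiguous X Y := forall x y x' y',
  X x -> Y y -> X x' -> Y y' -> x ++ y = x' ++ y' -> x = x'.

Lemma unambiguous_lword_l x Y : unambiguous (lword x) Y.
Proof. by move=> ? ? ? ? -> _ ->. Qed.

Lemma unambiguous_lword_r X y : unambiguous X (lword y).
Proof. by move=> ? ? ? ? _ -> _ -> /catIs. Qed.

Lemma ambiguous_witness X Y : ~ unambiguous X Y ->
  exists x y x' y', [/\ X x, Y y, X x', Y y' & x ++ y = x' ++ y' /\ x <> x'].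
Proof.
move=> nU; apply: NNPP => nW; apply: nU => x y x' y' Hx Hy Hx' Hy' E.
by apply: NNPP => ne; apply: nW; exists x, y, x', y'.
Qed.

Lemma card2E X a b : lang_card2 X -> X a -> X b -> a <> b ->
  forall w, X w <-> w = a \/ w = b.
Proof.
move=> [c [d [_ HX]]] /HX Ha /HX Hb ab w; rewrite HX.
by move: ab; case: Ha => ->; case: Hb => -> //; tauto.
Qed.

Lemma code_ext Z Z' : is_code Z -> (forall w, Z w <-> Z' w) -> is_code Z'.
Proof.
by move=> C E l1 l2 H1 H2; apply: C => u Hu; apply/E; [apply: H1|apply: H2].
Qed.

Lemma subset_plus_lprod_l X Y : subset_plus X -> subset_plus (lprod X Y).
Proof. by move=> SX _ [[|c x] [y [/SX + [_ ->]]]]. Qed.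

Lemma subset_plus_lprod_r X Y : subset_plus Y -> subset_plus (lprod X Y).
Proof. by move=> SY _ [x [y [_ [/SY + ->]]]]; case: x; case: y. Qed.

Lemma subset_plus_lunion X Y :
  subset_plus X -> subset_plus Y -> subset_plus (lunion X Y).
Proof. by move=> SX SY w [/SX|/SY]. Qed.

Definition alternating X Y (startX : bool) l :=
  forall i, i < size l -> (if startX (+) odd i then X else Y) (nth [::] l i).

Lemma alternating_cons X Y b u l : alternating X Y b (u :: l) <->
  (if b then X else Y) u /\ alternating X Y (~~ b) l.
Proof.
split=> [H|[Hu Hl] [|i] /= Hi].
- split=> [|i Hi]; first by have := H 0 isT; rewrite addbF.
  by have := H i.+1 Hi; rewrite /= addbN -addNb.
- by rewrite addbF.
- by have := Hl i Hi; rewrite addbN -addNb.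
Qed.

Lemma alternating_cat X Y b l1 l2 : alternating X Y b l1 ->
  alternating X Y (b (+) odd (size l1)) l2 -> alternating X Y b (l1 ++ l2).
Proof.
elim: l1 b => [|u l1 IH] b /=; first by rewrite addbF.
move=> /alternating_cons [Hu Hl1] Hl2; apply/alternating_cons; split=> //.
by apply: IH => //; move: Hl2; rewrite addbN -addNb.
Qed.

Lemma alternating1 X Y b u : (if b then X else Y) u -> alternating X Y b [:: u].
Proof. by move=> Hu [|] // _; rewrite addbF. Qed.

Inductive xy_chain X Y : seq (word A) -> Prop :=
| xy_chain_nil : xy_chain X Y [::]
| xy_chain_cons x y l :
    X x -> Y y -> xy_chain X Y l -> xy_chain X Y (x :: y :: l).

Lemma alternating_xy_chain X Y l :
  alternating X Y true l -> ~~ odd (size l) -> xy_chain X Y l.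
Proof.
have [n] := ubnP (size l); elim: n l => // n IH [|x [|y l]] //=.
  by constructor.
move=> /ltnSE/ltnW sz /alternating_cons [Hx /alternating_cons [Hy Hl]].
by rewrite negbK => odd_l; constructor => //; apply: IH.
Qed.

Fixpoint pair_cats l : seq (word A) :=
  if l is x :: y :: l' then (x ++ y) :: pair_cats l' else [::].

Lemma pair_cats_lprod X Y l : xy_chain X Y l ->
  forall u, u \in pair_cats l -> lprod X Y u.
Proof.
elim=> [|x y l' Hx Hy _ IH] u //=; rewrite inE => /orP [/eqP ->|/IH //].
by exists x, y.
Qed.

Lemma flatten_pair_cats X Y l :
  xy_chain X Y l -> flatten (pair_cats l) = flatten l.
Proof. by elim=> //= x y l' _ _ _ ->; rewrite catA. Qed.

Lemma pair_cats_inj X Y l1 l2 : unambiguous X Y ->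
  xy_chain X Y l1 -> xy_chain X Y l2 -> pair_cats l1 = pair_cats l2 -> l1 = l2.
Proof.
move=> U H1; elim: H1 l2 => [|x y l Hx Hy _ IH] _ [] //= x' y' l' Hx' Hy' H2.
case=> Exy /(IH _ H2) ->; have Ex := U _ _ _ _ Hx Hy Hx' Hy' Exy.
by move: Exy; rewrite Ex => /catsI ->.
Qed.

Section Padding.
Variables (X Y : lang A) (x0 y0 : word A).
Hypotheses (Hx0 : X x0) (Hy0 : Y y0).

Definition pad (startX : bool) l :=
  (if startX then [::] else [:: x0]) ++ l ++
  (if startX == odd (size l) then [:: y0] else [::]).

Lemma xy_chain_pad b l : alternating X Y b l -> xy_chain X Y (pad b l).
Proof.
move=> Hl; apply: alternating_xy_chain; last first.
  by rewrite /pad !size_cat !oddD; case: (b); case: (odd (size l)).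
apply: alternating_cat; first by case: (b); [case | apply: alternating1].
have -> : true (+) odd (size (if b then [::] else [:: x0])) = b by case: (b).
apply: alternating_cat => //; case: eqP => [<-|_ []//].
by apply: alternating1; rewrite addbb.
Qed.

Lemma pad_inj b l1 l2 : odd (size l1) = odd (size l2) ->
  pad b l1 = pad b l2 -> l1 = l2.
Proof. by rewrite /pad => ->; move/catsI/catIs. Qed.

End Padding.

Lemma alt_code_of_unambiguous X Y : nonempty_lang X -> nonempty_lang Y ->
  is_code (lprod X Y) -> unambiguous X Y -> alt_code X Y.
Proof.
move=> [x0 Hx0] [y0 Hy0] C U b l1 l2 [_ H1] [_ H2] odd12 flat12.
have P1 := xy_chain_pad Hx0 Hy0 H1; have P2 := xy_chain_pad Hx0 Hy0 H2.
apply: (pad_inj odd12); apply: (pair_cats_inj U P1 P2); apply: C.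
- exact: pair_cats_lprod P1.
- exact: pair_cats_lprod P2.
rewrite (flatten_pair_cats P1) (flatten_pair_cats P2) !flatten_cat.
by rewrite flat12 odd12.
Qed.

Lemma alt_induced_of_unambiguous Z X Y :
  subset_plus X -> subset_plus Y -> nonempty_lang X -> nonempty_lang Y ->
  is_code Z -> (forall w, Z w <-> lprod X Y w) -> unambiguous X Y ->
  alt_induced Z.
Proof.
move=> SX SY NX NY C EZ U; exists X, Y; do 5 split => //.
by apply: alt_code_of_unambiguous => //; apply: code_ext EZ.
Qed.

Lemma lprod_pair_l X Y x t : (forall w, X w <-> w = x \/ w = x ++ t) ->
  forall w, lprod X Y w <-> lprod (lword x) (lunion Y (lprod (lword t) Y)) w.
Proof.
move=> EX w; split.
- move=> [u [v [/EX [] -> [Hv ->]]]].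
    by exists x, v; split=> //; split=> //; left.
  exists x, (t ++ v); rewrite catA; split=> //; split=> //.
  by right; exists t, v.
- move=> [u [v [-> [[Hv|[t' [v' [-> [Hv' ->]]]]] ->]]]].
    by exists x, v; rewrite EX; split => //; left.
  by exists (x ++ t), v'; rewrite EX catA; split => //; right.
Qed.

Lemma lprod_pair_r X Y y t : (forall w, Y w <-> w = t ++ y \/ w = y) ->
  forall w, lprod X Y w <-> lprod (lunion X (lprod X (lword t))) (lword y) w.
Proof.
move=> EY w; split.
- move=> [u [v [Hu [/EY [] -> ->]]]]; last by exists u, y; split=> //; left.
  by exists (u ++ t), y; rewrite catA; split=> //; right; exists u, t.
- move=> [u [v [[Hu|[u' [t' [Hu' [-> ->]]]]] [-> ->]]]].
    by exists u, y; rewrite EY; split=> //; split=> //; right.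
  by exists u', (t ++ y); rewrite EY catA; split=> //; split=> //; left.
Qed.

Lemma alt_induced_pair_l Z X Y x t :
  subset_plus X -> subset_plus Y -> nonempty_lang Y ->
  is_code Z -> (forall w, Z w <-> lprod X Y w) ->
  (forall w, X w <-> w = x \/ w = x ++ t) -> alt_induced Z.
Proof.
move=> SX SY [y Hy] C EZ EX.
apply: (@alt_induced_of_unambiguous _ (lword x) (lunion Y (lprod (lword t) Y))).
- by move=> _ ->; apply: SX; rewrite EX; left.
- by apply: subset_plus_lunion => //; apply: subset_plus_lprod_r.
- by exists x.
- by exists y; left.
- exact: C.
- by move=> w; rewrite EZ (lprod_pair_l _ EX).
- exact: unambiguous_lword_l.
Qed.

Lemma alt_induced_pair_r Z X Y y t :
  subset_plus X -> subset_plus Y -> nonempty_lang X ->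
  is_code Z -> (forall w, Z w <-> lprod X Y w) ->
  (forall w, Y w <-> w = t ++ y \/ w = y) -> alt_induced Z.
Proof.
move=> SX SY [x Hx] C EZ EY.
apply: (@alt_induced_of_unambiguous _ (lunion X (lprod X (lword t))) (lword y)).
- by apply: subset_plus_lunion => //; apply: subset_plus_lprod_l.
- by move=> _ ->; apply: SY; rewrite EY; right.
- by exists x; left.
- by exists y.
- exact: C.
- by move=> w; rewrite EZ (lprod_pair_r _ EY).
- exact: unambiguous_lword_r.
Qed.

End Words.

Theorem mainTheorem3 (A : finType) (Z X Y : lang A) :
  subset_plus Z -> is_code Z ->
  subset_plus X -> subset_plus Y -> nonempty_lang X -> nonempty_lang Y ->
  (forall w, Z w <-> lprod X Y w) ->
  lang_card2 X \/ lang_card2 Y ->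
  alt_induced Z.
Proof.
move=> _ C SX SY NX NY EZ card.
have [U|/ambiguous_witness] := classic (unambiguous X Y).
  exact: (alt_induced_of_unambiguous SX SY NX NY C EZ U).
move=> [x [y [x' [y' [Hx Hy Hx' Hy' [E ne]]]]]].
wlog [t [Ex' Ey]] : x y x' y' Hx Hy Hx' Hy' E ne /
    exists t, x' = x ++ t /\ y = t ++ y'.
  move=> wlog_prefix; have [t [[Ex' Ey]|[Ex Ey']]] := cat_eq_cat E.
    by apply: (wlog_prefix x y x' y') => //; exists t.
  have ne' : x' <> x by move=> /esym.
  by apply: (wlog_prefix x' y' x y Hx' Hy' Hx Hy (esym E) ne'); exists t.
case: card => card.
- have EX : forall w, X w <-> w = x \/ w = x ++ t.
    by rewrite -Ex'; apply: card2E.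
  exact: alt_induced_pair_l SX SY NY C EZ EX.
- have ne_y : y <> y' by move=> Eyy; apply: ne; move: E; rewrite Eyy => /catIs.
  have EY : forall w, Y w <-> w = t ++ y' \/ w = y'.
    by rewrite -Ey; apply: card2E.
  exact: alt_induced_pair_r SX SY NX C EZ EY.
Qed.
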